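(* Let $\lambda,\mu>0$, let $X$ be the stationary birth–death process with rates $\lambda_n=\lambda$, $\mu_n=\mu n$ (marginal Poisson with mean $\lambda/\mu$), and $\Lambda(t)=\exp\{X(t)-\frac{\lambda}{\mu}(e-1)\}$. Then there is a constant $c>0$ such that for all $\tau\in\mathbb{R}$, $$c\,e^{-\mu|\tau|}\le \operatorname{Cov}(\Lambda(t),\Lambda(t+\tau))\le \operatorname{Var}(\Lambda(0))\,e^{-\mu|\tau|}.$$
   Context: The birth–death process is started in its stationary (Poisson) distribution, so $\Lambda$ is strictly stationary. *)

From Stdlib Require Import Reals Arith.
Open Scope R_scope.

Definition rho (lam mu : R) : R := lam / mu.

Definition pi_st (lam mu : R) (n : nat) : R :=
  exp (- rho lam mu) * rho lam mu ^ n / INR (Factorial.fact n).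

(* Lambda(t) = f(X(t)) with f(n) = exp{n - (lambda/mu)(e-1)}. *)
Definition Lf (lam mu : R) (n : nat) : R :=
  exp (INR n - rho lam mu * (exp 1 - 1)).

(* (Q g)(n) = lambda (g(n+1) - g(n)) + mu n (g(n-1) - g(n)); the n = 0 death
   term vanishes because mu*0 = 0. *)
Definition backward_rhs (lam mu : R) (P : R -> nat -> nat -> R)
  (t : R) (n m : nat) : R :=
  lam * P t (S n) m + mu * INR n * P t (Nat.pred n) m
  - (lam + mu * INR n) * P t n m.

(* P is a (standard) transition function of the chain with rates
   lambda_n = lambda, mu_n = mu n : stochastic matrices for t >= 0,
   P(0) = I, right-continuous at 0 and satisfying Kolmogorov's backward
   equations for t > 0.  For this non-explosive chain this determines P
   uniquely (it is the transition function of X). *)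
Definition bd_transition (lam mu : R) (P : R -> nat -> nat -> R) : Prop :=
  (forall t n m, 0 <= t -> 0 <= P t n m) /\
  (forall t n, 0 <= t -> infinite_sum (fun m => P t n m) 1) /\
  (forall n m, P 0 n m = if Nat.eqb n m then 1 else 0) /\
  (forall n m eps, 0 < eps -> exists d, 0 < d /\
      forall t, 0 < t < d -> Rabs (P t n m - P 0 n m) < eps) /\
  (forall t n m, 0 < t ->
      derivable_pt_lim (fun s => P s n m) t (backward_rhs lam mu P t n m)).

(* Cov(Lambda(t), Lambda(t+tau)) = v for the stationary chain:
   E[Lambda(t) Lambda(t+tau)] = sum_n pi_n f(n) sum_m P_{|tau|}(n,m) f(m)
   (stationarity / time-reversal gives dependence on |tau| only),
   E[Lambda(t)] = sum_n pi_n f(n). *)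
Definition is_cov (lam mu : R) (P : R -> nat -> nat -> R) (tau v : R) : Prop :=
  exists (g : nat -> R) (S M : R),
    (forall n, infinite_sum (fun m => P (Rabs tau) n m * Lf lam mu m) (g n)) /\
    infinite_sum (fun n => pi_st lam mu n * Lf lam mu n * g n) S /\
    infinite_sum (fun n => pi_st lam mu n * Lf lam mu n) M /\
    v = S - M * M.

Definition is_var (lam mu : R) (V : R) : Prop :=
  exists S2 M : R,
    infinite_sum (fun n => pi_st lam mu n * (Lf lam mu n * Lf lam mu n)) S2 /\
    infinite_sum (fun n => pi_st lam mu n * Lf lam mu n) M /\
    V = S2 - M * M.

From Stdlib Require Import Reals Lra Lia Psatz.
From Coquelicot Require Import Coquelicot.
Open Scope R_scope.

(* Started at n, the chain has E_n[z^(X_t)] = pgf z t n: each initial individual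
   survives independently with probability p = e^(-mu t), and the immigrants
   present at time t form a Poisson(rho (1 - p)) population.  pgf solves the
   backward equations, and so do the truncated sums sum_(m <= M) P_t(n,m) z^m.
   A maximum principle for the backward equations (a spatial maximum of a
   solution cannot increase; perturb by eps e^(C t) b^n to make this strict and
   to control large n) squeezes the truncated sums between pgf z - 2^(-M-1) pgf (2z)
   and pgf z, so the series equals pgf z.  With z = e and the Poisson(rho)
   stationary law, Cov(tau) = exp(a p) - 1 and Var = e^a - 1 for
   a = rho (e - 1)^2, p = e^(-mu |tau|); the bounds a p <= e^(a p) - 1 <= (e^a - 1) p
   then give the claim with c = a. *)

Lemma derivable_pt_lim_eq f x l l' :
  derivable_pt_lim f x l -> l = l' -> derivable_pt_lim f x l'.
Proof. now intros H <-. Qed.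

Lemma derivable_pt_lim_exp_scal a s :
  derivable_pt_lim (fun s => exp (a * s)) s (a * exp (a * s)).
Proof.
  replace (a * exp (a * s)) with (exp (a * s) * (a * 1)) by ring.
  apply (derivable_pt_lim_comp (fun s => a * s) exp).
  - apply (derivable_pt_lim_scal id), derivable_pt_lim_id.
  - apply derivable_pt_lim_exp.
Qed.

Lemma derivable_pt_lim_left_max f a x l : a < x -> derivable_pt_lim f x l ->
  (forall s, a <= s <= x -> f s <= f x) -> 0 <= l.
Proof.
  intros Hax Hd Hmax. destruct (Rle_or_lt 0 l) as [|Hl]; [assumption|exfalso].
  destruct (Hd (- l / 2)) as [del Hdel]; [lra|].
  pose proof (cond_pos del) as Hdel0.
  set (h := - Rmin (del / 2) ((x - a) / 2)).
  assert (H1 := Rmin_l (del / 2) ((x - a) / 2)).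
  assert (H2 := Rmin_r (del / 2) ((x - a) / 2)).
  assert (Hh : 0 < - h) by (unfold h; rewrite Ropp_involutive; apply Rmin_glb_lt; lra).
  specialize (Hdel h ltac:(lra)).
  rewrite Rabs_left in Hdel by lra. specialize (Hdel ltac:(unfold h in *; lra)).
  assert (Hf : f (x + h) <= f x) by (apply Hmax; unfold h in *; lra).
  set (q := (f (x + h) - f x) / h) in *.
  assert (Hq : q * h = f (x + h) - f x) by (unfold q; field; lra).
  assert (0 <= q) by nra.
  apply Rabs_def2 in Hdel. lra.
Qed.

Definition right_cont0 (f : R -> R) : Prop :=
  forall eps, 0 < eps -> exists d, 0 < d /\ forall t, 0 < t < d -> Rabs (f t - f 0) < eps.

Lemma right_cont0_ext f g : (forall s, f s = g s) -> right_cont0 f -> right_cont0 g.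
Proof.
  intros E H eps Heps. destruct (H eps Heps) as [d [Hd H']].
  exists d. split; [exact Hd|]. intros t Ht. rewrite <- !E. auto.
Qed.

Lemma right_cont0_of_continuity f : continuity_pt f 0 -> right_cont0 f.
Proof.
  intros H eps Heps. destruct (H eps Heps) as [d [Hd H']].
  exists d. split; [exact Hd|]. intros t Ht. apply H'.
  split; [split; [constructor|lra]|]. simpl. unfold Rdist. apply Rabs_def1; lra.
Qed.

Lemma right_cont0_const c : right_cont0 (fun _ => c).
Proof.
  intros eps Heps. exists 1. split; [lra|]. intros t _.
  rewrite Rminus_diag, Rabs_R0. exact Heps.
Qed.

Lemma right_cont0_add_scal f g c :
  right_cont0 f -> right_cont0 g -> right_cont0 (fun s => f s + c * g s).
Proof.
  intros Hf Hg eps Heps. set (k := Rabs c + 1).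
  assert (Hk : 0 < k) by (pose proof (Rabs_pos c); unfold k; lra).
  destruct (Hf (eps / 2)) as [d1 [Hd1 H1]]; [lra|].
  destruct (Hg (eps / (2 * k))) as [d2 [Hd2 H2]]; [apply Rdiv_lt_0_compat; lra|].
  exists (Rmin d1 d2). split; [apply Rmin_glb_lt; auto|]. intros t Ht.
  assert (Ht1 := Rmin_l d1 d2). assert (Ht2 := Rmin_r d1 d2).
  specialize (H1 t ltac:(lra)). specialize (H2 t ltac:(lra)).
  replace (f t + c * g t - (f 0 + c * g 0)) with ((f t - f 0) + c * (g t - g 0)) by ring.
  eapply Rle_lt_trans; [apply Rabs_triang|]. rewrite Rabs_mult.
  assert (Rabs c * Rabs (g t - g 0) <= k * (eps / (2 * k))).
  { apply Rmult_le_compat; [apply Rabs_pos|apply Rabs_pos|unfold k; lra|lra]. }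
  replace (k * (eps / (2 * k))) with (eps / 2) in * by (field; lra). lra.
Qed.

Lemma uniform_delta (Pr : nat -> R -> Prop) :
  (forall n, exists d, 0 < d /\ forall s, 0 < s < d -> Pr n s) ->
  forall N, exists a, 0 < a /\ forall s n, 0 < s < a -> (n < N)%nat -> Pr n s.
Proof.
  intros H N. induction N as [|N [a [Ha IH]]].
  - exists 1. split; [lra|]. intros; lia.
  - destruct (H N) as [d [Hd HN]].
    exists (Rmin a d). split; [apply Rmin_glb_lt; auto|].
    intros s n Hs Hn. assert (H1 := Rmin_l a d). assert (H2 := Rmin_r a d).
    destruct (Nat.eq_dec n N) as [->|]; [apply HN; lra|apply IH; [lra|lia]].
Qed.

Lemma finite_family_argmax (F : nat -> R -> R) a b : a <= b ->
  (forall n s, a <= s <= b -> continuity_pt (F n) s) ->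
  forall N, exists n t, (n <= N)%nat /\ a <= t <= b /\
    forall k s, (k <= N)%nat -> a <= s <= b -> F k s <= F n t.
Proof.
  intros Hab Hc N. induction N as [|N [n [t [HnN [Ht IH]]]]].
  - destruct (continuity_ab_maj (F 0%nat) a b Hab (Hc 0%nat)) as [M [HM HMab]].
    exists 0%nat, M. repeat split; try lra || lia.
    intros k s Hk Hs. replace k with 0%nat by lia. auto.
  - destruct (continuity_ab_maj (F (S N)) a b Hab (Hc (S N))) as [M [HM HMab]].
    destruct (Rle_or_lt (F n t) (F (S N) M)).
    + exists (S N), M. repeat split; try lra || lia. intros k s Hk Hs.
      destruct (Nat.eq_dec k (S N)) as [->|]; [auto|].
      eapply Rle_trans; [apply IH; auto; lia|auto].
    + exists n, t. repeat split; try lra || lia. intros k s Hk Hs.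
      destruct (Nat.eq_dec k (S N)) as [->|]; [specialize (HM s Hs); lra|].
      apply IH; auto; lia.
Qed.

Lemma INR_le_pow2 n : INR n <= 2 ^ n.
Proof.
  induction n as [|n IH]; [simpl; lra|].
  rewrite S_INR. simpl. assert (1 <= 2 ^ n) by (apply pow_R1_Rle; lra). lra.
Qed.

Lemma pow_dominated K c eps : 1 <= c -> 0 < eps ->
  exists N, forall n, (N <= n)%nat -> K * c ^ n < eps * (2 * c) ^ n.
Proof.
  intros Hc Heps. destruct (INR_unbounded (K / eps)) as [N HN]. exists N.
  intros n Hn. rewrite Rpow_mult_distr.
  assert (H2 : K / eps < 2 ^ n).
  { eapply Rlt_le_trans; [apply HN|]. eapply Rle_trans; [apply le_INR, Hn|apply INR_le_pow2]. }
  assert (HK : K < eps * 2 ^ n).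
  { apply (Rmult_lt_compat_l eps) in H2; [|exact Heps].
    replace (eps * (K / eps)) with K in H2 by (field; lra). exact H2. }
  assert (0 < c ^ n) by (apply pow_lt; lra). nra.
Qed.

Definition bd_gen (lam mu : R) (u : nat -> R) (n : nat) : R :=
  lam * u (S n) + mu * INR n * u (Nat.pred n) - (lam + mu * INR n) * u n.

Definition backward_sol (lam mu : R) (w : R -> nat -> R) : Prop :=
  forall t n, 0 < t -> derivable_pt_lim (fun s => w s n) t (bd_gen lam mu (w t) n).

Lemma bd_gen_le0_at_max lam mu u n : 0 <= lam -> 0 <= mu ->
  (forall k, u k <= u n) -> bd_gen lam mu u n <= 0.
Proof.
  intros Hlam Hmu Hmax. unfold bd_gen.
  pose proof (Hmax (S n)). pose proof (Hmax (Nat.pred n)). pose proof (pos_INR n).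
  assert (0 <= mu * INR n) by nra. nra.
Qed.

Lemma bd_gen_pow_lt lam mu b n : 0 < lam -> 0 <= mu -> 1 <= b ->
  bd_gen lam mu (pow b) n < lam * b ^ S n.
Proof.
  intros Hlam Hmu Hb. unfold bd_gen.
  assert (b ^ Nat.pred n <= b ^ n) by (apply Rle_pow; [lra|lia]).
  assert (0 < b ^ n) by (apply pow_lt; lra).
  pose proof (pos_INR n). assert (0 <= mu * INR n) by nra. nra.
Qed.

Lemma backward_sol_add_scal lam mu u v c :
  backward_sol lam mu u -> backward_sol lam mu v ->
  backward_sol lam mu (fun s k => u s k + c * v s k).
Proof.
  intros Hu Hv t n Ht. eapply derivable_pt_lim_eq.
  - apply derivable_pt_lim_plus; [apply Hu, Ht|].
    apply (derivable_pt_lim_scal (fun s => v s n)), Hv, Ht.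
  - unfold bd_gen. ring.
Qed.

(* At a maximum over [a/2, t] x {0..N} the time derivative is >= 0, while the
   generator is <= 0 there. *)
Lemma strict_subsolution_neg lam mu (W : R -> nat -> R) N a :
  0 <= lam -> 0 <= mu -> 0 < a ->
  (forall t n, 0 < t -> exists l,
      derivable_pt_lim (fun s => W s n) t l /\ l < bd_gen lam mu (W t) n) ->
  (forall t n, 0 < t -> (N <= n)%nat -> W t n < 0) ->
  (forall t n, 0 < t < a -> W t n < 0) ->
  forall t n, 0 < t -> W t n < 0.
Proof.
  intros Hlam Hmu Ha Hsub Hfar Hnear t0 n0 Ht0.
  destruct (Rlt_or_le t0 a) as [|Hat0]; [apply Hnear; lra|].
  destruct (Nat.lt_ge_cases n0 N) as [Hn0|]; [|apply Hfar; auto].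
  destruct (Rlt_or_le (W t0 n0) 0) as [|Hpos]; [assumption|exfalso].
  destruct (finite_family_argmax (fun n s => W s n) (a / 2) t0) with (N := N)
    as [ns [ts [HnsN [Hts Hmax]]]]; [lra| |].
  { intros n s Hs. destruct (Hsub s n) as [l [Hl _]]; [lra|].
    apply derivable_continuous_pt. exists l. exact Hl. }
  assert (Hge : W t0 n0 <= W ts ns) by (apply Hmax; [lia|lra]).
  assert (Hts2 : a / 2 < ts).
  { destruct (Rle_lt_or_eq_dec _ _ (proj1 Hts)) as [|<-]; [assumption|].
    specialize (Hnear (a / 2) ns ltac:(lra)). lra. }
  assert (Hspace : forall k, W ts k <= W ts ns).
  { intros k. destruct (Nat.le_gt_cases k N).
    - apply Hmax; [assumption|lra].
    - specialize (Hfar ts k ltac:(lra) ltac:(lia)). lra. }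
  destruct (Hsub ts ns) as [l [Hl Hlt]]; [lra|].
  assert (Htime : 0 <= l).
  { apply (derivable_pt_lim_left_max (fun s => W s ns) (a / 2) ts l Hts2 Hl).
    intros s Hs. apply Hmax; [assumption|lra]. }
  pose proof (bd_gen_le0_at_max lam mu (W ts) ns Hlam Hmu Hspace). lra.
Qed.

(* Compare w with eps e^(C s) b^k, b = 2c, C = lam b: the growth bound makes the
   difference negative for large k, right-continuity for small s, and
   bd_gen b^k < lam b^(k+1) makes it a strict subsolution. *)
Lemma backward_max_principle lam mu (w : R -> nat -> R) :
  0 < lam -> 0 <= mu -> backward_sol lam mu w ->
  (forall n, right_cont0 (fun s => w s n)) -> (forall n, w 0 n <= 0) ->
  (exists K c, 1 <= c /\ forall t n, 0 <= t -> w t n <= K * c ^ n) ->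
  forall t n, 0 <= t -> w t n <= 0.
Proof.
  intros Hlam Hmu Hw Hrc H0 [K [c [Hc Hgrowth]]] t n Ht.
  destruct (Req_dec t 0) as [->|Ht0]; [apply H0|].
  set (b := 2 * c). set (C := lam * b).
  assert (Hb : 1 <= b) by (unfold b; lra).
  assert (Hbk : forall k, 1 <= b ^ k) by (intros; apply pow_R1_Rle, Hb).
  assert (HE : forall s, 0 <= s -> 1 <= exp (C * s)).
  { intros s Hs. pose proof (exp_ineq1_le (C * s)).
    assert (0 <= C * s) by (unfold C; apply Rmult_le_pos; [nra|lra]). lra. }
  assert (Hweps : forall eps, 0 < eps -> w t n < eps * (exp (C * t) * b ^ n)).
  { intros eps Heps.
    set (W := fun s k => w s k - eps * (exp (C * s) * b ^ k)).
    enough (W t n < 0) by (unfold W in *; lra).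
    destruct (pow_dominated K c eps Hc Heps) as [N HN].
    assert (Hfar : forall s k, 0 <= s -> (N <= k)%nat -> W s k < 0).
    { intros s k Hs Hk. unfold W. pose proof (Hgrowth s k Hs). specialize (HN k Hk).
      fold b in HN. specialize (HE s Hs). specialize (Hbk k).
      assert (eps * b ^ k * 1 <= eps * b ^ k * exp (C * s))
        by (apply Rmult_le_compat_l; [apply Rmult_le_pos|]; lra).
      lra. }
    destruct (uniform_delta (fun k s => W s k < 0)) with (N := N) as [a [Ha Hnear]].
    { intros k. destruct (Hrc k eps Heps) as [d [Hd Hd']].
      exists d. split; [exact Hd|]. intros s Hs.
      specialize (Hd' s Hs). apply Rabs_def2 in Hd'. unfold W.
      specialize (H0 k). specialize (HE s ltac:(lra)). specialize (Hbk k).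
      assert (eps * 1 <= eps * (exp (C * s) * b ^ k))
        by (apply Rmult_le_compat_l; [lra|nra]).
      lra. }
    apply (strict_subsolution_neg lam mu W N a); try lra.
    - intros s k Hs. exists (bd_gen lam mu (w s) k - eps * (C * exp (C * s) * b ^ k)). split.
      + apply derivable_pt_lim_minus; [apply Hw, Hs|].
        apply (derivable_pt_lim_scal (fun s => exp (C * s) * b ^ k)).
        apply (derivable_pt_lim_scal_right (fun s => exp (C * s))).
        apply derivable_pt_lim_exp_scal.
      + assert (HWgen : bd_gen lam mu (W s) k
                 = bd_gen lam mu (w s) k - eps * exp (C * s) * bd_gen lam mu (pow b) k)
          by (unfold W, bd_gen; ring).
        pose proof (bd_gen_pow_lt lam mu b k Hlam Hmu Hb).
        assert (eps * exp (C * s) * bd_gen lam mu (pow b) k < eps * exp (C * s) * (lam * b ^ S k))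
          by (apply Rmult_lt_compat_l; [apply Rmult_lt_0_compat; [|apply exp_pos]|]; lra).
        replace (eps * (C * exp (C * s) * b ^ k))
          with (eps * exp (C * s) * (lam * b ^ S k)) by (unfold C; simpl; ring).
        lra.
    - intros s k Hs Hk. apply Hfar; [lra|exact Hk].
    - intros s k Hs. destruct (Nat.lt_ge_cases k N).
      + apply Hnear; assumption.
      + apply Hfar; [lra|assumption]. }
  apply Rle_plus_epsilon. intros eps Heps.
  set (M := exp (C * t) * b ^ n).
  assert (HM : 0 < M) by (pose proof (HE t Ht); pose proof (Hbk n); unfold M; nra).
  specialize (Hweps (eps / M) ltac:(apply Rdiv_lt_0_compat; lra)).
  replace (eps / M * (exp (C * t) * b ^ n)) with eps in Hweps by (fold M; field; lra). lra.
Qed.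

Lemma backward_comparison lam mu (u v : R -> nat -> R) :
  0 < lam -> 0 <= mu -> backward_sol lam mu u -> backward_sol lam mu v ->
  (forall n, right_cont0 (fun s => u s n)) -> (forall n, right_cont0 (fun s => v s n)) ->
  (forall n, u 0 n <= v 0 n) ->
  (exists K c, 1 <= c /\ forall t n, 0 <= t -> u t n - v t n <= K * c ^ n) ->
  forall t n, 0 <= t -> u t n <= v t n.
Proof.
  intros Hlam Hmu Hu Hv Hru Hrv H0 Hgrowth t n Ht.
  enough (u t n + -1 * v t n <= 0) by lra.
  apply (backward_max_principle lam mu (fun s k => u s k + -1 * v s k)); auto.
  - apply backward_sol_add_scal; assumption.
  - intros k. apply right_cont0_add_scal; auto.
  - intros k. specialize (H0 k). lra.
  - destruct Hgrowth as [K [c [Hc Hg]]]. exists K, c. split; [exact Hc|].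
    intros s k Hs. specialize (Hg s k Hs). lra.
Qed.

Definition pgf (lam mu z t : R) (n : nat) : R :=
  exp (rho lam mu * (1 - exp (- mu * t)) * (z - 1)) * (1 + exp (- mu * t) * (z - 1)) ^ n.

Lemma exp_neg_mul_bounds mu t : 0 < mu -> 0 <= t -> 0 < exp (- mu * t) <= 1.
Proof.
  intros Hmu Ht. split; [apply exp_pos|]. rewrite <- exp_0.
  destruct (Req_dec t 0) as [->|]; [right; f_equal; ring|].
  left. apply exp_increasing. nra.
Qed.

Lemma pgf_derivative lam mu z t n : 0 < mu ->
  derivable_pt_lim (fun s => pgf lam mu z s n) t (bd_gen lam mu (pgf lam mu z t) n).
Proof.
  intros Hmu. apply is_derive_Reals. unfold pgf. auto_derive; [exact I|].
  unfold bd_gen. set (p := exp (- mu * t)). set (r := rho lam mu).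
  assert (Hrho : r * mu = lam) by (unfold r, rho; field; lra).
  replace (1 + - p) with (1 - p) by ring.
  set (E := exp (r * (1 - p) * (z - 1))). rewrite <- Hrho.
  destruct n as [|n]; simpl Nat.pred; [simpl; ring|]. rewrite S_INR. simpl pow. ring.
Qed.

Lemma pgf_backward lam mu z : 0 < mu -> backward_sol lam mu (pgf lam mu z).
Proof. intros Hmu t n _. apply pgf_derivative, Hmu. Qed.

Lemma pgf_right_cont0 lam mu z n : 0 < mu -> right_cont0 (fun s => pgf lam mu z s n).
Proof.
  intros Hmu. apply right_cont0_of_continuity, derivable_continuous_pt.
  eexists. apply pgf_derivative, Hmu.
Qed.

Lemma pgf_at0 lam mu z n : pgf lam mu z 0 n = z ^ n.
Proof.
  unfold pgf. replace (- mu * 0) with 0 by ring. rewrite exp_0.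
  replace (rho lam mu * (1 - 1) * (z - 1)) with 0 by ring. rewrite exp_0.
  replace (1 + 1 * (z - 1)) with z by ring. ring.
Qed.

Lemma pgf_bounds lam mu z t n : 0 < lam -> 0 < mu -> 1 <= z -> 0 <= t ->
  0 <= pgf lam mu z t n <= exp (rho lam mu * (z - 1)) * z ^ n.
Proof.
  intros Hlam Hmu Hz Ht. pose proof (exp_neg_mul_bounds mu t Hmu Ht) as Hp.
  set (p := exp (- mu * t)) in *. unfold pgf. fold p.
  assert (Hr : 0 < rho lam mu) by (apply Rdiv_lt_0_compat; assumption).
  assert (Hq : 0 <= 1 + p * (z - 1) <= z) by nra.
  assert (HE : exp (rho lam mu * (1 - p) * (z - 1)) <= exp (rho lam mu * (z - 1))).
  { destruct (Req_dec z 1) as [->|Hz1]; [right; f_equal; ring|].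
    assert (0 < rho lam mu * (z - 1) * p)
      by (apply Rmult_lt_0_compat; [apply Rmult_lt_0_compat|]; lra).
    left. apply exp_increasing. lra. }
  split.
  - apply Rmult_le_pos; [left; apply exp_pos|apply pow_le; lra].
  - apply Rmult_le_compat; [left; apply exp_pos|apply pow_le; lra|exact HE|].
    apply pow_incr. exact Hq.
Qed.

Section TransitionFunction.
Variables (lam mu : R) (P : R -> nat -> nat -> R).
Hypotheses (Hlam : 0 < lam) (Hmu : 0 < mu) (HP : bd_transition lam mu P).

Lemma transition_le1 t n m : 0 <= t -> P t n m <= 1.
Proof.
  intros Ht. destruct HP as [Hnn [Hsum _]].
  apply Rle_trans with (sum_f_R0 (P t n) m).
  - destruct m as [|m]; simpl; [lra|].
    pose proof (cond_pos_sum (P t n) m (fun k => Hnn t n k Ht)). lra.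
  - apply growing_ineq; [|apply Hsum, Ht].
    intros k. simpl. pose proof (Hnn t n (S k) Ht). lra.
Qed.

Variable z : R.
Hypothesis Hz : 1 <= z.

Definition trunc_pgf (M : nat) (t : R) (n : nat) : R :=
  sum_f_R0 (fun m => P t n m * z ^ m) M.

Lemma trunc_pgf_backward M : backward_sol lam mu (trunc_pgf M).
Proof.
  destruct HP as [_ [_ [_ [_ Hback]]]]. intros t n Ht.
  induction M as [|M IH]; unfold trunc_pgf in *.
  - eapply derivable_pt_lim_eq; [apply derivable_pt_lim_scal_right, Hback, Ht|].
    unfold backward_rhs, bd_gen. simpl. ring.
  - eapply derivable_pt_lim_eq.
    + apply derivable_pt_lim_plus; [exact IH|apply derivable_pt_lim_scal_right, Hback, Ht].
    + unfold backward_rhs, bd_gen. simpl. ring.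
Qed.

Lemma trunc_pgf_right_cont0 M n : right_cont0 (fun s => trunc_pgf M s n).
Proof.
  destruct HP as [_ [_ [_ [Hrc _]]]].
  induction M as [|M IH]; unfold trunc_pgf in *.
  - apply (right_cont0_ext (fun s => 0 + z ^ 0 * P s n 0%nat)); [intros; simpl; ring|].
    apply right_cont0_add_scal; [apply right_cont0_const|intros eps; apply Hrc].
  - apply (right_cont0_ext (fun s => sum_f_R0 (fun m => P s n m * z ^ m) M
                                   + z ^ S M * P s n (S M))); [intros; simpl; ring|].
    apply right_cont0_add_scal; [exact IH|intros eps; apply Hrc].
Qed.

Lemma trunc_pgf_at0 M n : trunc_pgf M 0 n = if (n <=? M)%nat then z ^ n else 0.
Proof.
  destruct HP as [_ [_ [H0 _]]]. unfold trunc_pgf.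
  induction M as [|M IH]; simpl sum_f_R0; rewrite H0.
  - destruct n; simpl; ring.
  - rewrite IH. destruct (Nat.leb_spec n M), (Nat.leb_spec n (S M)), (Nat.eqb_spec n (S M));
      try lia; subst; simpl; ring.
Qed.

Lemma trunc_pgf_bounds M t n : 0 <= t ->
  0 <= trunc_pgf M t n <= sum_f_R0 (fun m => z ^ m) M.
Proof.
  intros Ht. destruct HP as [Hnn _]. unfold trunc_pgf. split.
  - apply cond_pos_sum. intros m. apply Rmult_le_pos; [apply Hnn, Ht|apply pow_le; lra].
  - apply sum_Rle. intros m _. pose proof (Hnn t n m Ht). pose proof (transition_le1 t n m Ht).
    pose proof (pow_le z m ltac:(lra)). nra.
Qed.

Lemma trunc_le_pgf M t n : 0 <= t -> trunc_pgf M t n <= pgf lam mu z t n.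
Proof.
  apply (backward_comparison lam mu (trunc_pgf M) (pgf lam mu z)); try lra.
  - apply trunc_pgf_backward.
  - apply pgf_backward, Hmu.
  - apply trunc_pgf_right_cont0.
  - intros k. apply pgf_right_cont0, Hmu.
  - intros k. rewrite trunc_pgf_at0, pgf_at0. pose proof (pow_le z k ltac:(lra)).
    destruct (k <=? M)%nat; lra.
  - exists (sum_f_R0 (fun m => z ^ m) M), 1. split; [lra|]. intros s k Hs.
    rewrite pow1, Rmult_1_r. pose proof (trunc_pgf_bounds M s k Hs).
    pose proof (pgf_bounds lam mu z s k Hlam Hmu Hz Hs). lra.
Qed.

(* The tail beyond M is controlled by the generating function at 2z, since
   z^k <= 2^(-M-1) (2z)^k for k > M. *)
Lemma pgf_le_trunc M t n : 0 <= t ->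
  pgf lam mu z t n <= trunc_pgf M t n + (/ 2) ^ S M * pgf lam mu (2 * z) t n.
Proof.
  set (c := (/ 2) ^ S M). assert (Hc : 0 < c) by (apply pow_lt; lra).
  apply (backward_comparison lam mu (pgf lam mu z)
           (fun s k => trunc_pgf M s k + c * pgf lam mu (2 * z) s k)); try lra.
  - apply pgf_backward, Hmu.
  - apply backward_sol_add_scal; [apply trunc_pgf_backward|apply pgf_backward, Hmu].
  - intros k. apply pgf_right_cont0, Hmu.
  - intros k. apply right_cont0_add_scal; [apply trunc_pgf_right_cont0|apply pgf_right_cont0, Hmu].
  - intros k. rewrite trunc_pgf_at0, !pgf_at0, Rpow_mult_distr.
    assert (Hzk : 0 <= z ^ k) by (apply pow_le; lra).
    assert (H2k : 0 < 2 ^ k) by (apply pow_lt; lra).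
    destruct (Nat.leb_spec k M).
    + assert (0 <= c * (2 ^ k * z ^ k)) by (apply Rmult_le_pos; [lra|apply Rmult_le_pos; lra]).
      lra.
    + assert (Hc2 : c * 2 ^ S M = 1).
      { unfold c. rewrite <- Rpow_mult_distr, Rinv_l by lra. apply pow1. }
      assert (c * 2 ^ S M <= c * 2 ^ k) by (apply Rmult_le_compat_l, Rle_pow; lra || lia).
      assert (z ^ k * 1 <= z ^ k * (c * 2 ^ k)) by (apply Rmult_le_compat_l; lra).
      lra.
  - exists (exp (rho lam mu * (z - 1))), z. split; [exact Hz|]. intros s k Hs.
    pose proof (pgf_bounds lam mu z s k Hlam Hmu Hz Hs).
    pose proof (trunc_pgf_bounds M s k Hs).
    pose proof (pgf_bounds lam mu (2 * z) s k Hlam Hmu ltac:(lra) Hs). nra.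
Qed.

Lemma pgf_series t n : 0 <= t ->
  infinite_sum (fun m => P t n m * z ^ m) (pgf lam mu z t n).
Proof.
  intros Ht eps Heps. set (G2 := pgf lam mu (2 * z) t n).
  assert (HG2 : 0 <= G2) by (apply (pgf_bounds lam mu (2 * z) t n); lra).
  destruct (pow_lt_1_zero (/ 2) ltac:(rewrite Rabs_pos_eq; lra) (eps / (G2 + 1)))
    as [N HN]; [apply Rdiv_lt_0_compat; lra|].
  exists N. intros M HM. unfold Rdist.
  pose proof (trunc_le_pgf M t n Ht) as Hlow. pose proof (pgf_le_trunc M t n Ht) as Hup.
  fold G2 in Hup. unfold trunc_pgf in Hlow, Hup.
  specialize (HN (S M) ltac:(lia)). rewrite Rabs_pos_eq in HN by (apply pow_le; lra).
  rewrite Rabs_left1 by lra.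
  assert ((/ 2) ^ S M * G2 <= eps / (G2 + 1) * G2) by (apply Rmult_le_compat_r; lra).
  assert (eps / (G2 + 1) * G2 < eps).
  { replace (eps / (G2 + 1) * G2) with (eps - eps / (G2 + 1)) by (field; lra).
    assert (0 < eps / (G2 + 1)) by (apply Rdiv_lt_0_compat; lra). lra. }
  lra.
Qed.

End TransitionFunction.

Lemma infinite_sum_ext f g l :
  (forall n, f n = g n) -> infinite_sum f l -> infinite_sum g l.
Proof. intros E. apply Un_cv_ext. intros N. apply sum_eq. auto. Qed.

Lemma infinite_sum_scal f l c :
  infinite_sum f l -> infinite_sum (fun n => c * f n) (c * l).
Proof.
  intros H. apply (Un_cv_ext (fun N => c * sum_f_R0 f N)).
  - intros N. rewrite scal_sum. apply sum_eq. intros; ring.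
  - apply (CV_mult (fun _ => c)); [|exact H].
    intros eps Heps. exists 0%nat. intros. unfold Rdist. rewrite Rminus_diag, Rabs_R0. lra.
Qed.

Lemma exp_series x : infinite_sum (fun i => / INR (Factorial.fact i) * x ^ i) (exp x).
Proof. unfold exp. destruct (exist_exp x) as [l Hl]. exact Hl. Qed.

Lemma poisson_pgf lam mu x :
  infinite_sum (fun n => pi_st lam mu n * x ^ n) (exp (rho lam mu * (x - 1))).
Proof.
  set (r := rho lam mu).
  replace (exp (r * (x - 1))) with (exp (- r) * exp (r * x))
    by (rewrite <- exp_plus; f_equal; ring).
  eapply infinite_sum_ext; [|apply infinite_sum_scal, exp_series].
  intros n. unfold pi_st. fold r. rewrite Rpow_mult_distr. field. apply INR_fact_neq_0.
Qed.

Lemma exp_INR m : exp (INR m) = exp 1 ^ m.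
Proof.
  induction m as [|m IH]; [apply exp_0|]. rewrite S_INR, exp_plus, IH. simpl. ring.
Qed.

Lemma Lf_pow lam mu m : Lf lam mu m = exp (- (rho lam mu * (exp 1 - 1))) * exp 1 ^ m.
Proof. unfold Lf. unfold Rminus at 1. rewrite exp_plus, exp_INR. ring. Qed.

(* Convexity of exp: the chord slope on [0, p] is at most the one on [p, 1]. *)
Lemma expm1_mul_le a p : 0 < a -> 0 < p <= 1 -> exp (a * p) - 1 <= (exp a - 1) * p.
Proof.
  intros Ha Hp. destruct (Req_dec p 1) as [->|Hp1]; [rewrite Rmult_1_r; lra|].
  assert (Hd : forall s, derivable_pt_lim (fun s => exp (a * s)) s (a * exp (a * s)))
    by (intros; apply derivable_pt_lim_exp_scal).
  destruct (MVT_cor2 _ _ 0 p ltac:(lra) (fun s _ => Hd s)) as [x [Hx Hx0p]].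
  destruct (MVT_cor2 _ _ p 1 ltac:(lra) (fun s _ => Hd s)) as [y [Hy Hyp1]].
  rewrite Rmult_0_r, exp_0 in Hx. rewrite Rmult_1_r in Hy.
  assert (exp (a * x) < exp (a * y)) by (apply exp_increasing; nra).
  assert (a * exp (a * x) * (p - 0) * (1 - p) <= a * exp (a * y) * (1 - p) * p).
  { assert (0 < a * p * (1 - p)) by (apply Rmult_lt_0_compat; [nra|lra]). nra. }
  nra.
Qed.

Theorem mainTheorem5 (lam mu : R) (Hlam : 0 < lam) (Hmu : 0 < mu)
  (P : R -> nat -> nat -> R) (HP : bd_transition lam mu P) :
  exists c : R, 0 < c /\
    forall tau : R, exists v V : R,
      is_cov lam mu P tau v /\ is_var lam mu V /\
      c * exp (- mu * Rabs tau) <= v /\ v <= V * exp (- mu * Rabs tau).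
Proof.
  set (e := exp 1). set (r := rho lam mu). set (L0 := exp (- (r * (e - 1)))).
  set (a := r * (e - 1) ^ 2).
  assert (He : 1 < e) by (pose proof (exp_ineq1_le 1); unfold e; lra).
  assert (Ha : 0 < a).
  { apply Rmult_lt_0_compat; [apply Rdiv_lt_0_compat; lra|apply pow_lt; lra]. }
  assert (HLf : forall m, Lf lam mu m = L0 * e ^ m) by (intros; apply Lf_pow).
  assert (Hmean : infinite_sum (fun n => pi_st lam mu n * Lf lam mu n) 1).
  { replace 1 with (L0 * exp (r * (e - 1)))
      by (unfold L0; rewrite <- exp_plus, <- exp_0; f_equal; ring).
    eapply infinite_sum_ext; [|apply infinite_sum_scal, poisson_pgf].
    intros n. simpl. rewrite HLf. fold r. ring. }
  exists a. split; [exact Ha|]. intros tau.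
  set (p := exp (- mu * Rabs tau)).
  assert (Hp : 0 < p <= 1) by (apply exp_neg_mul_bounds; [exact Hmu|apply Rabs_pos]).
  exists (exp (a * p) - 1), (exp a - 1). split; [|split; [|split]].
  - exists (fun n => L0 * pgf lam mu e (Rabs tau) n), (exp (a * p)), 1.
    split; [|split; [|split; [exact Hmean|ring]]].
    + intros n. eapply infinite_sum_ext;
        [|apply infinite_sum_scal, (pgf_series lam mu P Hlam Hmu HP); [lra|apply Rabs_pos]].
      intros m. simpl. rewrite HLf. ring.
    + set (q := e * (1 + p * (e - 1))).
      replace (exp (a * p))
        with (L0 * L0 * exp (r * (1 - p) * (e - 1)) * exp (r * (q - 1)))
        by (unfold L0, q, a; rewrite <- !exp_plus; f_equal; ring).
      eapply infinite_sum_ext; [|apply infinite_sum_scal, poisson_pgf].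
      intros n. simpl. rewrite HLf. unfold pgf, q. fold r p. rewrite Rpow_mult_distr. ring.
  - exists (exp a), 1. split; [|split; [exact Hmean|ring]].
    replace (exp a) with (L0 * L0 * exp (r * (e * e - 1)))
      by (unfold L0, a; rewrite <- !exp_plus; f_equal; ring).
    eapply infinite_sum_ext; [|apply infinite_sum_scal, poisson_pgf].
    intros n. simpl. rewrite !HLf, Rpow_mult_distr. fold r. ring.
  - pose proof (exp_ineq1_le (a * p)). lra.
  - apply expm1_mul_le; assumption.
Qed.
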